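(* Let $\ell_1,\ell_2$ be two distinct intersecting lines in $\mathbb{R}^2$ given by $L_i=0$, where $L_i=A_ix+B_iy+C_i$ (real coefficients), $i=1,2$. For a real constant $C$, let $f(x,y)=L_1^2L_2+L_1+C$ and let $\Gamma$ be the real algebraic curve $f(x,y)=0$. Then $\Gamma$ is asymptotic to the lines $\ell_1$ and $\ell_2$. Moreover, if $C\neq0$, then $f$ is an irreducible bivariate polynomial. *)

From HB Require Import structures.
From mathcomp Require Import all_boot all_order all_algebra.
From mathcomp Require Import reals.
From mathcomp Require Import mpoly.
Set Implicit Arguments. Unset Strict Implicit. Unset Printing Implicit Defensive.
Import Order.TTheory GRing.Theory Num.Theory.
Local Open Scope ring_scope.

(* The affine linear form L(x,y) = A x + B y + C as a bivariate polynomial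
   in the variables 'X_0 = x and 'X_1 = y. *)
Definition linform (R : realType) (A B C : R) : {mpoly R[2]} :=
  A *: 'X_0 + B *: 'X_1 + C%:MP.

Definition ev2 (R : realType) (p : {mpoly R[2]}) (x y : R) : R :=
  p.@[fun i : 'I_2 => if val i == 0%N then x else y].

(* The line A x + B y + C = 0 (a genuine line requires (A,B) <> (0,0)). *)
Definition line (R : realType) (A B C : R) : R * R -> Prop :=
  fun p => A * p.1 + B * p.2 + C = 0.

Definition zero_set (R : realType) (f : {mpoly R[2]}) : R * R -> Prop :=
  fun p => ev2 f p.1 p.2 = 0.

Definition sqnorm2 (R : realType) (p : R * R) : R := p.1 ^+ 2 + p.2 ^+ 2.
Definition sqdist2 (R : realType) (p q : R * R) : R :=
  (p.1 - q.1) ^+ 2 + (p.2 - q.2) ^+ 2.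

(* A curve G is asymptotic to a set (line) l : there is a sequence of points
   of G tending to infinity whose Euclidean distance to l tends to 0, i.e.
   points q_n of l with |p_n - q_n| -> 0.  Written out with epsilons:
   |p_n| -> +oo  and  |p_n - q_n| -> 0. *)
Definition asymptotic_to (R : realType) (G l : R * R -> Prop) : Prop :=
  exists (p q : nat -> R * R),
    (forall n, G (p n)) /\ (forall n, l (q n)) /\
    (forall M : R, exists N, forall n, (N <= n)%N -> M ^+ 2 < sqnorm2 (p n)) /\
    (forall eps : R, 0 < eps ->
       exists N, forall n, (N <= n)%N -> sqdist2 (p n) (q n) < eps ^+ 2).

Definition irreducible_mpoly (R : realType) (f : {mpoly R[2]}) : Prop :=
  f != 0 /\ f \isn't a GRing.unit /\
  forall g h : {mpoly R[2]}, f = g * h -> g \is a GRing.unit \/ h \is a GRing.unit.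

From HB Require Import structures.
From mathcomp Require Import all_boot all_order all_algebra.
From mathcomp Require Import reals mpoly ring lra zify.
From mathcomp Require Import boolp.

(* Writing u = L1, v = L2, the curve is u^2 v + u + C = 0, and (u, v) is an affine change of
   coordinates of the plane because the lines meet.  Along the curve, u = +-1/t forces
   |v| ~ |C| t^2 + t, and v = -(t + C)/t^2 -> 0 as u = t -> oo: these give points of the curve
   going to infinity with L1 -> 0, resp. L2 -> 0, i.e. approaching l1, resp. l2.  In the
   coordinates (u, v), f = u^2 v + u + C has degree 1 in v, so a factorisation has a factor of
   degree 0 in v, which divides both u^2 and u + C; these are coprime when C <> 0. *)
Set Implicit Arguments.
Unset Strict Implicit.
Unset Printing Implicit Defensive.
Import Order.TTheory GRing.Theory Num.Theory.
Local Open Scope ring_scope.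

Lemma det_eq0_linform_eq0 (R : idomainType) (A1 B1 A2 B2 a b : R) :
  (A1, B1) != (0, 0) -> A1 * B2 - A2 * B1 = 0 ->
  A1 * a + B1 * b = 0 -> A2 * a + B2 * b = 0.
Proof.
move=> AB1 D0 e1.
have eA : A1 * (A2 * a + B2 * b) = A2 * (A1 * a + B1 * b) + b * (A1 * B2 - A2 * B1) by ring.
have eB : B1 * (A2 * a + B2 * b) = B2 * (A1 * a + B1 * b) - a * (A1 * B2 - A2 * B1) by ring.
rewrite e1 D0 !mulr0 ?addr0 ?subr0 in eA eB.
move: AB1; rewrite xpair_eqE negb_and => /orP[] /negbTE neq0.
  by move/eqP: eA; rewrite mulf_eq0 neq0 => /eqP.
by move/eqP: eB; rewrite mulf_eq0 neq0 => /eqP.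
Qed.

Lemma meeting_lines_det_neq0 (R : realType) (A1 B1 C1 A2 B2 C2 : R) :
  (A1, B1) != (0, 0) -> (A2, B2) != (0, 0) ->
  line A1 B1 C1 <> line A2 B2 C2 ->
  (exists p : R * R, line A1 B1 C1 p /\ line A2 B2 C2 p) ->
  A1 * B2 - A2 * B1 != 0.
Proof.
rewrite /line => AB1 AB2 neq_lines [[x0 y0] /= [l1 l2]]; apply/eqP => D0.
apply: neq_lines; apply: funext => q; apply: propext.
have shift A B Cc :
  A * q.1 + B * q.2 + Cc = A * (q.1 - x0) + B * (q.2 - y0) + (A * x0 + B * y0 + Cc) by ring.
have D0' : A2 * B1 - A1 * B2 = 0 by rewrite -opprB D0 oppr0.
rewrite (shift A1) (shift A2) l1 l2 !addr0; split.
  exact: det_eq0_linform_eq0.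
exact: det_eq0_linform_eq0.
Qed.

(* Coordinates in which the two lines become the axes: [(u, v) = (L1, L2)]. *)
Section LineCoordinates.
Variables (F : fieldType) (A1 B1 C1 A2 B2 C2 : F).
Let D := A1 * B2 - A2 * B1.
Hypothesis D_neq0 : D != 0.

Section Ring.
Variables (S : comNzRingType) (iota : {rmorphism F -> S}).

Definition xcoord (u v : S) : S :=
  iota (B2 / D) * (u - iota C1) - iota (B1 / D) * (v - iota C2).
Definition ycoord (u v : S) : S :=
  iota (A1 / D) * (v - iota C2) - iota (A2 / D) * (u - iota C1).

Lemma linform1_coord u v : iota A1 * xcoord u v + iota B1 * ycoord u v + iota C1 = u.
Proof.
transitivity (iota (A1 * (B2 / D) - B1 * (A2 / D)) * (u - iota C1) + iota C1
   + iota (B1 * (A1 / D) - A1 * (B1 / D)) * (v - iota C2)).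
  by rewrite /xcoord /ycoord; ring.
have -> : A1 * (B2 / D) - B1 * (A2 / D) = 1 by rewrite /D; field.
have -> : B1 * (A1 / D) - A1 * (B1 / D) = 0 by field.
by rewrite rmorph1 rmorph0 mul1r mul0r addr0 subrK.
Qed.

Lemma linform2_coord u v : iota A2 * xcoord u v + iota B2 * ycoord u v + iota C2 = v.
Proof.
transitivity (iota (A2 * (B2 / D) - B2 * (A2 / D)) * (u - iota C1) + iota C2
   + iota (B2 * (A1 / D) - A2 * (B1 / D)) * (v - iota C2)).
  by rewrite /xcoord /ycoord; ring.
have -> : A2 * (B2 / D) - B2 * (A2 / D) = 0 by field.
have -> : B2 * (A1 / D) - A2 * (B1 / D) = 1 by rewrite /D; field.
by rewrite rmorph1 rmorph0 mul1r mul0r add0r addrC subrK.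
Qed.

Let lin (A B Cc x y : S) := A * x + B * y + Cc.

Lemma xcoord_linform x y :
  xcoord (lin (iota A1) (iota B1) (iota C1) x y) (lin (iota A2) (iota B2) (iota C2) x y) = x.
Proof.
transitivity (iota (B2 / D * A1 - B1 / D * A2) * x + iota (B2 / D * B1 - B1 / D * B2) * y).
  by rewrite /xcoord /lin; ring.
have -> : B2 / D * A1 - B1 / D * A2 = 1 by rewrite /D; field.
have -> : B2 / D * B1 - B1 / D * B2 = 0 by field.
by rewrite rmorph1 rmorph0 mul1r mul0r addr0.
Qed.

Lemma ycoord_linform x y :
  ycoord (lin (iota A1) (iota B1) (iota C1) x y) (lin (iota A2) (iota B2) (iota C2) x y) = y.
Proof.
transitivity (iota (A1 / D * A2 - A2 / D * A1) * x + iota (A1 / D * B2 - A2 / D * B1) * y).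
  by rewrite /ycoord /lin; ring.
have -> : A1 / D * B2 - A2 / D * B1 = 1 by rewrite /D; field.
have -> : A1 / D * A2 - A2 / D * A1 = 0 by field.
by rewrite rmorph1 rmorph0 mul1r mul0r add0r.
Qed.

End Ring.

Lemma rmorph_xcoord (S S' : comNzRingType) (iota : {rmorphism F -> S})
    (iota' : {rmorphism F -> S'}) (g : {rmorphism S -> S'}) u v :
  g \o iota =1 iota' ->
  g (xcoord iota u v) = xcoord iota' (g u) (g v) /\
  g (ycoord iota u v) = ycoord iota' (g u) (g v).
Proof.
move=> g_iota; have g_iotaE c : g (iota c) = iota' c by exact: g_iota.
by rewrite /xcoord /ycoord !rmorphB !(rmorphM g) (rmorphB g u) (rmorphB g v) !g_iotaE.
Qed.

End LineCoordinates.

Lemma sqr_linform_le (R : realFieldType) (A B x y : R) :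
  (A * x + B * y) ^+ 2 <= (A ^+ 2 + B ^+ 2) * (x ^+ 2 + y ^+ 2).
Proof.
have -> : (A ^+ 2 + B ^+ 2) * (x ^+ 2 + y ^+ 2) = (A * x + B * y) ^+ 2 + (A * y - B * x) ^+ 2
  by ring.
by rewrite lerDl sqr_ge0.
Qed.

Lemma sqr_coefs_gt0 (R : realFieldType) (A B : R) : (A, B) != (0, 0) -> 0 < A ^+ 2 + B ^+ 2.
Proof.
rewrite xpair_eqE negb_and => /orP[] neq0.
  by rewrite ltr_wpDr ?sqr_ge0 ?exprn_even_gt0.
by rewrite ltr_wpDl ?sqr_ge0 ?exprn_even_gt0.
Qed.

Lemma eventually_lt_nat (R : archiRealFieldType) (T : R) :
  exists N, forall n, (N <= n)%N -> T < n%:R.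
Proof.
exists (Num.bound `|T|) => n le_Nn.
apply: le_lt_trans (ler_norm T) _; apply: lt_le_trans (archi_boundP (normr_ge0 T)) _.
by rewrite ler_nat.
Qed.

Lemma sqnorm2_unbounded (R : realType) (A B Cc : R) (p : nat -> R * R) :
  (A, B) != (0, 0) ->
  (forall n, (n.+1)%:R ^+ 2 <= (A * (p n).1 + B * (p n).2 + Cc) ^+ 2) ->
  forall M : R, exists N, forall n, (N <= n)%N -> M ^+ 2 < sqnorm2 (p n).
Proof.
move=> /sqr_coefs_gt0 N2_gt0 grows M.
set N2 := A ^+ 2 + B ^+ 2 in N2_gt0.
have [N gtN] := eventually_lt_nat (2 * (Cc ^+ 2 + N2 * M ^+ 2)).
exists N => n /gtN; rewrite /sqnorm2.
have := grows n; have := sqr_linform_le A B (p n).1 (p n).2; rewrite -/N2.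
rewrite -natr1; have := ler0n R n.
set t := n%:R; set x := (p n).1; set y := (p n).2 => t_ge0 CS growt tbig.
have : 0 <= (A * x + B * y - Cc) ^+ 2 by exact: sqr_ge0.
nra.
Qed.

Lemma asymptotic_to_line (R : realType) (A B Cc : R) (G : R * R -> Prop) (p : nat -> R * R) :
  (A, B) != (0, 0) -> (forall n, G (p n)) ->
  (forall M : R, exists N, forall n, (N <= n)%N -> M ^+ 2 < sqnorm2 (p n)) ->
  (forall eps : R, 0 < eps ->
     exists N, forall n, (N <= n)%N -> (A * (p n).1 + B * (p n).2 + Cc) ^+ 2 < eps) ->
  asymptotic_to G (line A B Cc).
Proof.
move=> /sqr_coefs_gt0 N2_gt0 Gp unbounded vanishing.
set N2 := A ^+ 2 + B ^+ 2 in N2_gt0; have N2_neq0 : N2 != 0 by rewrite gt_eqF.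
pose w n := A * (p n).1 + B * (p n).2 + Cc.
(* [q n] is the orthogonal projection of [p n] on the line. *)
exists p, (fun n => ((p n).1 - w n / N2 * A, (p n).2 - w n / N2 * B)).
split=> //; split; last split=> //.
  by move=> n; rewrite /line /= /w /N2; field.
move=> eps eps_gt0.
have [N small] := vanishing (N2 * eps ^+ 2) (mulr_gt0 N2_gt0 (exprn_gt0 2 eps_gt0)).
exists N => n /small; rewrite /sqdist2 /= -/(w n).
have -> : ((p n).1 - ((p n).1 - w n / N2 * A)) ^+ 2 +
          ((p n).2 - ((p n).2 - w n / N2 * B)) ^+ 2 = w n ^+ 2 / N2 by rewrite /N2; field.
by rewrite ltr_pdivrMr // mulrC.
Qed.

Lemma sqr_vanishing (R : archiRealFieldType) (K : R) (u : nat -> R) :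
  (forall n, u n ^+ 2 * (n.+1)%:R ^+ 2 <= K) ->
  forall eps : R, 0 < eps -> exists N, forall n, (N <= n)%N -> u n ^+ 2 < eps.
Proof.
move=> bounded eps eps_gt0; have [N gtN] := eventually_lt_nat (K / eps).
exists N => n /gtN; rewrite ltr_pdivrMr // => Klt.
have := bounded n; rewrite -natr1; have := ler0n R n; set t := n%:R => t_ge0 ut.
have : 0 <= u n ^+ 2 by exact: sqr_ge0.
nra.
Qed.

Lemma const_factor_linear_poly (F : fieldType) (a0 a1 : {poly F}) (P Q : {poly {poly F}}) :
  coprimep a0 a1 -> P * Q = a1%:P * 'X + a0%:P -> (size P <= 1)%N ->
  exists2 c : F, c != 0 & P = c%:P%:P.
Proof.
move=> co PQ /size1_polyC eP; set c := P`_0 in eP.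
have dvd_coef i : c %| (a1%:P * 'X + a0%:P)`_i by rewrite -PQ eP coefCM dvdp_mulIl.
have /size_poly1P[c0 c0_neq0 ec] : size c == 1%N.
  rewrite size_poly_eq1; apply: (coprimepP _ _ co).
    by move: (dvd_coef 0%N); rewrite coefD coefMX !coefC add0r.
  by move: (dvd_coef 1%N); rewrite coefD coefMX !coefC addr0.
by exists c0; rewrite // eP ec.
Qed.

Lemma size_linear_poly (F : fieldType) (a0 a1 : {poly F}) :
  a1 != 0 -> size (a1%:P * 'X + a0%:P) = 2%N.
Proof. by move=> a1_neq0; rewrite size_MXaddC polyC_eq0 (negbTE a1_neq0) size_polyC a1_neq0. Qed.

Lemma linear_poly_factor_const (F : fieldType) (a0 a1 : {poly F}) (P Q : {poly {poly F}}) :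
  a1 != 0 -> coprimep a0 a1 -> P * Q = a1%:P * 'X + a0%:P ->
  (exists2 c : F, c != 0 & P = c%:P%:P) \/ (exists2 c : F, c != 0 & Q = c%:P%:P).
Proof.
move=> a1_neq0 co PQ.
have size_PQ : size (P * Q) = 2%N by rewrite PQ size_linear_poly.
have P_neq0 : P != 0 by apply: contra_eq_neq size_PQ => ->; rewrite mul0r size_poly0.
have Q_neq0 : Q != 0 by apply: contra_eq_neq size_PQ => ->; rewrite mulr0 size_poly0.
have := size_mul P_neq0 Q_neq0; rewrite size_PQ.
have sP : (0 < size P)%N by rewrite size_poly_gt0.
have sQ : (0 < size Q)%N by rewrite size_poly_gt0.
move=> sPQ.
have [sP1 | sQ1] : (size P <= 1)%N \/ (size Q <= 1)%N.
  by move: (size P) (size Q) sP sQ sPQ => m n; lia.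
  by left; exact: const_factor_linear_poly co PQ sP1.
by right; rewrite mulrC in PQ; exact: const_factor_linear_poly co PQ sQ1.
Qed.

Lemma coprimep_XaddC_Xsqr (F : fieldType) (C : F) : C != 0 -> coprimep ('X + C%:P) ('X ^+ 2).
Proof.
move=> C_neq0; apply: coprimep_expr.
have := @coprimep_XsubC2 F (- C) 0; rewrite sub0r opprK subr0 rmorphN opprK.
by apply.
Qed.

Lemma ev2_curve (R : realType) (A1 B1 C1 A2 B2 C2 C x y : R) :
  ev2 (linform A1 B1 C1 ^+ 2 * linform A2 B2 C2 + linform A1 B1 C1 + C%:MP) x y =
  (A1 * x + B1 * y + C1) ^+ 2 * (A2 * x + B2 * y + C2) + (A1 * x + B1 * y + C1) + C.
Proof.
by rewrite /ev2 /linform expr2 !mevalD !mevalM !mevalD !mevalZ !mevalXU !mevalC /=; ring.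
Qed.

Section Curve.
Variables (R : realType) (A1 B1 C1 A2 B2 C2 C : R).
Hypotheses (AB1_neq0 : (A1, B1) != (0, 0)) (AB2_neq0 : (A2, B2) != (0, 0)).
Hypothesis D_neq0 : A1 * B2 - A2 * B1 != 0.
Let L1 := linform A1 B1 C1.
Let L2 := linform A2 B2 C2.
Let f := L1 ^+ 2 * L2 + L1 + C%:MP.

Let point (u v : R) : R * R :=
  (xcoord A1 B1 C1 A2 B2 C2 idfun u v, ycoord A1 B1 C1 A2 B2 C2 idfun u v).

Lemma linform1_point u v : A1 * (point u v).1 + B1 * (point u v).2 + C1 = u.
Proof. exact: (linform1_coord C1 C2 D_neq0 idfun). Qed.

Lemma linform2_point u v : A2 * (point u v).1 + B2 * (point u v).2 + C2 = v.
Proof. exact: (linform2_coord C1 C2 D_neq0 idfun). Qed.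

Lemma zero_set_point u v : u ^+ 2 * v + u + C = 0 -> zero_set f (point u v).
Proof. by rewrite /zero_set ev2_curve linform1_point linform2_point. Qed.

(* Branch along [l1]: [L1 = s / t] and [L2 = - (s t + C t^2)], the sign [s] chosen so that
   [|L2| >= t]. *)
Lemma asymptotic_to_line1 : asymptotic_to (zero_set f) (line A1 B1 C1).
Proof.
pose s : R := if C < 0 then -1 else 1.
have s_sqr : s ^+ 2 = 1 by rewrite /s; case: ifP => _; rewrite ?sqrrN expr1n.
have sC_ge0 : 0 <= s * C by rewrite /s; case: ltP => [/ltW|]; rewrite ?mulN1r ?oppr_ge0 ?mul1r.
pose t n : R := n.+1%:R.
have t_ge1 n : 1 <= t n by rewrite ler1n.
pose p n := point (s / t n) (- (s * t n + C * t n ^+ 2)).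
apply: (@asymptotic_to_line _ _ _ _ _ p AB1_neq0).
- move=> n; apply: zero_set_point.
  transitivity ((1 - s ^+ 2) * (s / t n + C)); first by field; rewrite nat1r pnatr_eq0.
  by rewrite s_sqr subrr mul0r.
- apply: (sqnorm2_unbounded (Cc := C2) AB2_neq0) => n; rewrite /p linform2_point.
  have := t_ge1 n; set u := t n => u_ge1.
  have : 0 <= s * C * u ^+ 3 by rewrite mulr_ge0 // exprn_ge0 // (le_trans ler01).
  have : 0 <= C ^+ 2 * u ^+ 4 by rewrite mulr_ge0 ?sqr_ge0 // exprn_ge0 // (le_trans ler01).
  move: s_sqr; nra.
- apply: (@sqr_vanishing _ 1) => n; rewrite /p linform1_point.
  by rewrite expr_div_n divfK ?expf_neq0 ?pnatr_eq0 // s_sqr.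
Qed.

Lemma asymptotic_to_line2 : asymptotic_to (zero_set f) (line A2 B2 C2).
Proof.
pose t n : R := n.+1%:R.
have t_ge1 n : 1 <= t n by rewrite ler1n.
have t_neq0 n : t n != 0 by rewrite pnatr_eq0.
pose p n := point (t n) (- (t n + C) / t n ^+ 2).
apply: (@asymptotic_to_line _ _ _ _ _ p AB2_neq0).
- by move=> n; apply: zero_set_point; field; rewrite nat1r pnatr_eq0.
- by apply: (sqnorm2_unbounded (Cc := C1) AB1_neq0) => n; rewrite /p linform1_point.
- apply: (@sqr_vanishing _ (2 * (1 + C ^+ 2))) => n; rewrite /p linform2_point -/(t n).
  have := t_ge1 n; have := t_neq0 n; set u := t n => u_neq0 u_ge1; clearbody u.
  have -> : (- (u + C) / u ^+ 2) ^+ 2 * u ^+ 2 = (u + C) ^+ 2 / u ^+ 2 by field.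
  rewrite ler_pdivrMr ?exprn_gt0 ?(lt_le_trans ltr01) //.
  have : 0 <= (u - C) ^+ 2 by exact: sqr_ge0.
  have : 0 <= C ^+ 2 * (u ^+ 2 - 1).
    by rewrite mulr_ge0 ?sqr_ge0 // subr_ge0 expr_ge1 // (le_trans ler01).
  nra.
Qed.

(* In the coordinates [U = L1], [V = L2], [f] becomes [U^2 V + U + C], which is linear in
   [V]; [psi] performs this change of variables and [phi] undoes it. *)
Let iotaP : {rmorphism R -> {poly {poly R}}} := polyC \o polyC.
Let U : {poly {poly R}} := 'X%:P.
Let V : {poly {poly R}} := 'X.
Let coord_var (i : 'I_2) := if val i == 0%N then xcoord A1 B1 C1 A2 B2 C2 iotaP U V
                                              else ycoord A1 B1 C1 A2 B2 C2 iotaP U V.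
Let psi : {rmorphism {mpoly R[2]} -> {poly {poly R}}} := mmap iotaP coord_var.

Fact L1_comm : commr_rmorph (@mpolyC 2 R) L1. Proof. by move=> x; apply: mulrC. Qed.
Let ev1 : {rmorphism {poly R} -> {mpoly R[2]}} := horner_morph L1_comm.
Fact L2_comm : commr_rmorph ev1 L2. Proof. by move=> x; apply: mulrC. Qed.
Let phi : {rmorphism {poly {poly R}} -> {mpoly R[2]}} := horner_morph L2_comm.

Lemma phi_iota c : phi (iotaP c) = c%:MP.
Proof.
rewrite (_ : iotaP c = c%:P%:P) // /phi /= (horner_morphC L2_comm) /ev1 /=.
exact: horner_morphC.
Qed.

Lemma phi_coord_var i : phi (coord_var i) = 'X_i.
Proof.
have phiU : phi U = L1.
  by rewrite /phi /= (horner_morphC L2_comm) /ev1 /= (horner_morphX L1_comm).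
have phiV : phi V = L2 by rewrite /phi /= (horner_morphX L2_comm).
have [phi_x phi_y] :=
  @rmorph_xcoord _ A1 B1 C1 A2 B2 C2 _ _ iotaP (@mpolyC 2 R) phi U V phi_iota.
have lin_mpoly (A B Cc : R) : linform A B Cc = A%:MP * 'X_0 + B%:MP * 'X_1 + Cc%:MP.
  by rewrite /linform !mul_mpolyC.
have [-> | ->] : i = 0 \/ i = 1 by case: i => [[|[|]]] //= ?; [left|right]; apply/val_inj.
  by rewrite /coord_var /= phi_x phiU phiV /L1 /L2 !lin_mpoly (xcoord_linform C1 C2 D_neq0).
by rewrite /coord_var /= phi_y phiU phiV /L1 /L2 !lin_mpoly (ycoord_linform C1 C2 D_neq0).
Qed.

Lemma phi_psi p : phi (psi p) = p.
Proof.
rewrite {2}(mpolyE p) /psi /mmap rmorph_sum; apply: eq_bigr => m _.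
rewrite rmorphM phi_iota /mmap1 rmorph_prod -mul_mpolyC mpolyXE_id; congr (_ * _).
by apply: eq_bigr => i _; rewrite rmorphXn phi_coord_var.
Qed.

Lemma psi_linform A B Cc :
  psi (linform A B Cc) = iotaP A * coord_var 0 + iotaP B * coord_var 1 + iotaP Cc.
Proof. by rewrite /psi /linform !rmorphD /= !mmapZ !mmapX !mmap1U mmapC. Qed.

Lemma psi_curve : psi f = ('X ^+ 2)%:P * 'X + ('X + C%:P)%:P.
Proof.
have psiL1 : psi L1 = U by rewrite psi_linform (linform1_coord C1 C2 D_neq0).
have psiL2 : psi L2 = V by rewrite psi_linform (linform2_coord C1 C2 D_neq0).
rewrite /f 2!rmorphD rmorphM rmorphXn psiL1 psiL2 /psi /= mmapC.
by rewrite /U /V polyCD rmorphXn addrA.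
Qed.

Lemma irreducible_curve : C != 0 -> irreducible_mpoly f.
Proof.
move=> C_neq0; have co := coprimep_XaddC_Xsqr C_neq0.
have Xsqr_neq0 : 'X ^+ 2 != 0 :> {poly R} by rewrite expf_neq0 ?polyX_eq0.
have size_psi_f : size (psi f) = 2%N by rewrite psi_curve size_linear_poly.
have const_unit p c : c != 0 -> psi p = c%:P%:P -> p \is a GRing.unit.
  move=> c_neq0 psi_p; rewrite -[p]phi_psi psi_p -[c%:P%:P]/(iotaP c) phi_iota.
  by rewrite rmorph_unit ?unitfE.
split; [|split].
- by apply: contra_eq_neq size_psi_f => ->; rewrite rmorph0 size_poly0.
- by apply/negP => /(rmorph_unit psi); rewrite poly_unitE size_psi_f.
- move=> g h fgh.
  have gh : psi g * psi h = ('X ^+ 2)%:P * 'X + ('X + C%:P)%:P.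
    by rewrite -rmorphM -fgh psi_curve.
  have [[c c_neq0 /(const_unit _ _ c_neq0)] | [c c_neq0 /(const_unit _ _ c_neq0)]] :=
    linear_poly_factor_const Xsqr_neq0 co gh.
    by left.
  by right.
Qed.

End Curve.

Theorem lemma5 (R : realType) (A1 B1 C1 A2 B2 C2 C : R) :
  (* l1, l2 are lines *)
  (A1, B1) != (0, 0) -> (A2, B2) != (0, 0) ->
  (* distinct *)
  line A1 B1 C1 <> line A2 B2 C2 ->
  (* intersecting *)
  (exists p : R * R, line A1 B1 C1 p /\ line A2 B2 C2 p) ->
  let L1 := linform A1 B1 C1 in
  let L2 := linform A2 B2 C2 in
  let f := L1 ^+ 2 * L2 + L1 + C%:MP in
  (asymptotic_to (zero_set f) (line A1 B1 C1) /\
   asymptotic_to (zero_set f) (line A2 B2 C2)) /\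
  (C != 0 -> irreducible_mpoly f).
Proof.
move=> AB1_neq0 AB2_neq0 neq_lines meet L1 L2 f.
have D_neq0 := meeting_lines_det_neq0 AB1_neq0 AB2_neq0 neq_lines meet.
split; first split.
- exact: asymptotic_to_line1 AB1_neq0 AB2_neq0 D_neq0.
- exact: asymptotic_to_line2 AB1_neq0 AB2_neq0 D_neq0.
- exact: irreducible_curve.
Qed.
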